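(* Let $m$ be even and $n\in\mathbf{N}$. Let $q:M^{(m^n)}\to H^{(m^n)}$ be the homomorphism of $\mathbf{Z}S_{mn}$-modules sending an $(m^n)$-tabloid to the set partition whose sets are the rows of the tabloid. Then the Specht module $S^{(m^n)}\subseteq M^{(m^n)}$ is not contained in the kernel of $q$.
   Context: $M^{(m^n)}$ is the Young permutation $\mathbf{Z}S_{mn}$-module with basis the $(m^n)$-tabloids (tableaux of shape $(m^n)$ with entries a fixed $mn$-set, rows unordered). $H^{(m^n)}$ is the permutation $\mathbf{Z}S_{mn}$-module with basis the set partitions of the same $mn$-set into $n$ sets each of size $m$. $S^{(m^n)}$ is the Specht module, the $\mathbf{Z}$-span of the polytabloids $e_t=\{t\}\sum_{\tau\in C(t)}\mathrm{sgn}(\tau)\tau$, $C(t)$ the column stabilizer of $t$. *)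

From mathcomp Require Import all_boot all_order all_algebra all_fingroup.
Set Implicit Arguments. Unset Strict Implicit. Unset Printing Implicit Defensive.
Import GRing.Theory.
Local Open Scope ring_scope.

(* Cells of the shape (m^n) are 'I_n * 'I_m
   (row, column).
   - A tableau of shape (m^n) is a bijection entries -> cells, represented as
     an injective finite function g : 'I_(m*n) -> 'I_n * 'I_m
     (g x = cell in which x sits).
   - An (m^n)-tabloid is represented by its row function
     T : 'I_(m*n) -> 'I_n (T x = row containing x), each row of size m.
   - M^(m^n) is the free Z-module on tabloids: integer-valued functions on
     row functions (only tabloids are ever in the support of the vectors
     considered; q only reads tabloid coordinates).
   - H^(m^n) is the free Z-module on set partitions, embedded in the free
     Z-module on all sets of subsets of 'I_(m*n). *)

Section Defs.
Variables m n : nat.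

Definition rowfunT := {ffun 'I_(m*n) -> 'I_n}.
Definition tableauT := {ffun 'I_(m*n) -> 'I_n * 'I_m}.

Definition is_tableau (g : tableauT) : bool := injectiveb g.

Definition is_tabloid (T : rowfunT) : bool :=
  [forall i : 'I_n, #|[set x | T x == i]| == m].

Definition is_setpartition (P : {set {set 'I_(m*n)}}) : bool :=
  [&& partition P [set: 'I_(m*n)], #|P| == n & [forall B in P, #|B| == m]].

Definition Mmod := {ffun rowfunT -> int}.
Definition Hmod := {ffun {set {set 'I_(m*n)}} -> int}.

Definition tabloid_vec (T : rowfunT) : Mmod := [ffun T' => ((T' == T) : nat)%:Z].

Definition tabloid_of (g : tableauT) : rowfunT := [ffun x => (g x).1].

(* action of a permutation on (row functions of) tabloids:
   sigma {t} = {sigma t}, and x lies in row i of t iff sigma x lies in row i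
   of sigma t. *)
Definition perm_act (s : {perm 'I_(m*n)}) (T : rowfunT) : rowfunT :=
  [ffun y => T ((s^-1)%g y)].

Definition colstab (g : tableauT) : {set {perm 'I_(m*n)}} :=
  [set s : {perm 'I_(m*n)} | [forall x, (g (s x)).2 == (g x).2]].

Definition sgn (s : {perm 'I_(m*n)}) : int := (-1) ^+ (odd_perm s).

Definition polytabloid (g : tableauT) : Mmod :=
  \sum_(s in colstab g) [ffun T => sgn s * tabloid_vec (perm_act s (tabloid_of g)) T].

Definition in_specht (v : Mmod) : Prop :=
  exists (c : {ffun tableauT -> int}),
    (forall g, ~~ is_tableau g -> c g = 0) /\
    v = \sum_(g : tableauT) [ffun T => c g * polytabloid g T].

Definition rows_of (T : rowfunT) : {set {set 'I_(m*n)}} :=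
  [set [set x | T x == i] | i : 'I_n].

Definition qmap (v : Mmod) : Hmod :=
  [ffun P => \sum_(T : rowfunT | is_tabloid T && (rows_of T == P)) v T].

End Defs.

From mathcomp Require Import all_boot all_order all_algebra all_fingroup.
From mathcomp Require Import zify.
Set Implicit Arguments. Unset Strict Implicit. Unset Printing Implicit Defensive.
Import GRing.Theory Num.Theory.

(* Let t be a tableau and P the set partition formed by the rows of {t}.  The
   P-coordinate of q(e_t) is the sum of sgn(tau) over the tau in C(t) mapping
   the rows of t onto rows of t.  Such a tau permutes the rows as blocks while
   fixing every column, so it applies the same row permutation in each of the
   m columns; for m even it is therefore even.  All these terms are +1, and
   tau = 1 is one of them, so q(e_t) <> 0.
   The parity is obtained without counting: pairing column j with column
   j + m/2, tau is the product of its restriction A to the left half of the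
   columns and the conjugate of A by the pairing. *)

Lemma odd_perm_commute_swap (T : finType) (s c : {perm T}) (D : {pred T}) :
    {mono s : x / x \in D} -> (forall x, (c x \in D) = (x \notin D)) ->
    commute s c -> ~~ odd_perm s.
Proof.
move=> sD cD scs.
have cVD y : ((c^-1)%g y \in D) = (y \notin D) by rewrite -{2}(permKV c y) cD negbK.
pose a x := if x \in D then s x else x.
have a_inj : injective a.
  move=> x y; rewrite /a; case: ifPn => Dx; case: ifPn => Dy //.
  - exact: perm_inj.
  - by move=> exy; move: Dy; rewrite -exy sD Dx.
  - by move=> exy; move: Dx; rewrite exy sD Dy.
pose A := perm a_inj.
suff -> : s = (A * A ^ c)%g by rewrite odd_permM odd_permJ addbb.
apply/permP => x; rewrite conjgE !permM ![A _]permE /a.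
have [Dx|nDx] := boolP (x \in D).
  by rewrite cVD sD Dx permKV.
by rewrite cVD nDx -permM scs permM permKV.
Qed.

Lemma perm_conj_bij (T T' : finType) (f : T -> T') (u : T' -> T') :
  bijective f -> injective u -> exists c : {perm T}, forall x, f (c x) = u (f x).
Proof.
case=> finv fK finvK u_inj.
have c_inj : injective (finv \o u \o f).
  by move=> x y /(can_inj finvK) /u_inj /(can_inj fK).
by exists (perm c_inj) => x; rewrite permE /= finvK.
Qed.

Section HalfSwap.
Variable m : nat.
Hypothesis m_even : ~~ odd m.

Let m_half : m = (m./2 + m./2)%N.
Proof. by rewrite -{1}(odd_double_half m) (negbTE m_even) add0n -addnn. Qed.

Lemma half_swap_subproof (j : 'I_m) :
  ((if j < m./2 then j + m./2 else j - m./2) < m)%N.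
Proof. have := ltn_ord j; have := m_half; case: ifP => /ltP; lia. Qed.

Definition half_swap (j : 'I_m) : 'I_m := Ordinal (half_swap_subproof j).

Lemma half_swap_inj : injective half_swap.
Proof.
move=> j k /(congr1 val) /=; have := m_half; have := ltn_ord j; have := ltn_ord k.
by do 2![case: ifP => /ltP]; move=> *; apply: val_inj => /=; lia.
Qed.

Lemma half_swap_lt (j : 'I_m) : (half_swap j < m./2)%N = ~~ (j < m./2)%N.
Proof.
by have := m_half; have := ltn_ord j; rewrite /=; case: (ltnP j m./2) => /= *; lia.
Qed.

End HalfSwap.

Lemma perm_act_same_row m n (T : rowfunT m n) s x y :
  rows_of (perm_act s T) = rows_of T -> T x = T y -> T (s x) = T (s y).
Proof.
move=> rows_sT Txy.
have : [set z | perm_act s T z == T x] \in rows_of T by rewrite -rows_sT imset_f.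
case/imsetP => k _ /setP row_k.
have row_s z : T z = T x -> T (s z) = k.
  by move=> Tz; have := row_k (s z); rewrite !inE ffunE permK Tz eqxx => /esym/eqP.
by rewrite !row_s.
Qed.

Lemma polytabloidE m n (g : tableauT m n) T :
  polytabloid g T =
    (\sum_(s in colstab g) sgn s * tabloid_vec (perm_act s (tabloid_of g)) T)%R.
Proof. by rewrite /polytabloid sum_ffunE; apply: eq_bigr => s _; rewrite ffunE. Qed.

Lemma polytabloid_in_specht m n (g : tableauT m n) :
  is_tableau g -> in_specht (polytabloid g).
Proof.
move=> g_tab; exists [ffun g' => ((g' == g : nat)%:Z)%R]; split.
  by move=> g' ng'; rewrite ffunE; case: eqP => // eg; rewrite eg g_tab in ng'.
apply/ffunP => T; rewrite [RHS]sum_ffunE (bigD1 g) //= big1 => [|g' ng'].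
  by rewrite !ffunE eqxx mul1r addr0.
by rewrite !ffunE (negbTE ng') mul0r.
Qed.

Lemma exists_tableau m n : exists g : tableauT m n, is_tableau g.
Proof.
have card_cells : #|{: 'I_n * 'I_m}| = (m * n)%N by rewrite card_prod !card_ord mulnC.
exists [ffun x => enum_val (cast_ord (esym card_cells) x)].
by apply/injectiveP => x y; rewrite !ffunE => /enum_val_inj/cast_ord_inj.
Qed.

Section Tableau.
Variables m n : nat.
Variable g : tableauT m n.
Hypothesis g_inj : injective g.

Local Notation t := (tabloid_of g).

Lemma tableau_bij : bijective g.
Proof.
apply: (inj_card_bij g_inj); apply: eq_leq.
by have := card_prod 'I_n 'I_m; rewrite !card_ord mulnC.
Qed.

Lemma tabloid_of_tableau : is_tabloid t.
Proof.
apply/forallP => i; apply/eqP.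
have row_i : g @: [set x | t x == i] = setX [set i] [set: 'I_m].
  apply/setP => -[i' j]; rewrite !inE andbT; apply/imsetP/eqP => [[x]|<-].
    by rewrite inE /tabloid_of ffunE => /eqP <- ->.
  have [ginv gK ginvK] := tableau_bij.
  by exists (ginv (i', j)); rewrite ?inE /tabloid_of ?ffunE ginvK.
by rewrite -(card_imset [set x | t x == i] g_inj) row_i cardsX cards1 cardsT card_ord mul1n.
Qed.

Lemma colstab_fixes_col s x : s \in colstab g -> (g (s x)).2 = (g x).2.
Proof. by rewrite inE => /forallP /(_ x) /eqP. Qed.

Hypothesis m_even : ~~ odd m.

Lemma colstab_rows_fixed_even s :
  s \in colstab g -> rows_of (perm_act s t) = rows_of t -> ~~ odd_perm s.
Proof.
move=> s_col s_rows.
pose swap (c : 'I_n * 'I_m) := (c.1, half_swap m_even c.2).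
have swap_inj : injective swap.
  move=> [i j] [i' j'] e; have /= -> := congr1 fst e.
  by have /= /half_swap_inj -> := congr1 snd e.
have [c gc] := perm_conj_bij tableau_bij swap_inj.
apply: (odd_perm_commute_swap (c := c) (D := [pred x | (g x).2 < m./2]%N)).
- by move=> x; rewrite !inE colstab_fixes_col.
- by move=> x; rewrite !inE gc half_swap_lt.
apply/permP => x; apply: g_inj; rewrite !permM gc.
have same_row : (g (s (c x))).1 = (g (s x)).1.
  have := perm_act_same_row (x := c x) (y := x) s_rows.
  by rewrite /tabloid_of !ffunE; apply; rewrite gc.
rewrite [RHS]surjective_pairing same_row (colstab_fixes_col (c x) s_col) gc.
by rewrite /swap (colstab_fixes_col x s_col).
Qed.

Lemma qmap_polytabloid_neq0 : qmap (polytabloid g) != 0%R.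
Proof.
apply/eqP => /ffunP /(_ (rows_of t)); rewrite !ffunE => q0.
have term_ge0 T s : rows_of T = rows_of t -> s \in colstab g ->
    (0 <= sgn s * tabloid_vec (perm_act s t) T)%R.
  move=> T_rows s_col; rewrite ffunE; case: eqP => [T_st|]; last by rewrite mulr0.
  have s_rows : rows_of (perm_act s t) = rows_of t by rewrite -T_st.
  by rewrite /sgn (negbTE (colstab_rows_fixed_even s_col s_rows)) expr0 mulr1.
have t_row : is_tabloid t && (rows_of t == rows_of t) by rewrite tabloid_of_tableau eqxx.
have coeff_ge0 T : is_tabloid T && (rows_of T == rows_of t) ->
    (0 <= polytabloid g T)%R.
  move=> /andP[_ /eqP T_rows]; rewrite polytabloidE.
  by apply: sumr_ge0 => s; apply: term_ge0.
have one_col : (1%g : {perm 'I_(m * n)}) \in colstab g.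
  by rewrite inE; apply/forallP => x; rewrite perm1.
have act1 : perm_act 1 t = t by apply/ffunP => x; rewrite ffunE invg1 perm1.
have := psumr_eq0P coeff_ge0 q0 t_row; rewrite polytabloidE.
move/psumr_eq0P => /(_ (fun s => term_ge0 t s erefl) 1%g one_col).
by rewrite /sgn odd_perm1 act1 expr0 mul1r ffunE eqxx.
Qed.

End Tableau.

Theorem lemma4p1 (m n : nat) (hm : ~~ odd m) (hm0 : 0 < m) :
  ~ (forall v : Mmod m n, in_specht v -> qmap v = 0%R).
Proof.
move=> q_specht0.
have [g g_tab] := exists_tableau m n.
have := qmap_polytabloid_neq0 (injectiveP _ g_tab) hm.
by rewrite q_specht0 ?eqxx //; apply: polytabloid_in_specht.
Qed.
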